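(* Let $R$ be an associative ring with identity $1$ and with an involution $*$, and let $p,q\in R$ be projections. Then the following statements are equivalent: (1) $1-pq$ is Moore–Penrose invertible; (2) $1-pqp$ is Moore–Penrose invertible; (3) $p-pqp$ is Moore–Penrose invertible; (4) $1-qp$ is Moore–Penrose invertible; (5) $1-qpq$ is Moore–Penrose invertible; (6) $q-qpq$ is Moore–Penrose invertible.
   Context: An involution on $R$ is a map $a\mapsto a^*$ with $(a^* )^*=a$, $(a+b)^*=a^*+b^*$, $(ab)^*=b^*a^*$. An element $a\in R$ is Moore–Penrose (MP) invertible if there exists $b\in R$ with $aba=a$, $bab=b$, $(ab)^*=ab$, $(ba)^*=ba$; such $b$ is unique and denoted $a^{\dagger}$. A projection is an element $p$ with $p^2=p=p^*$. *)

From HB Require Import structures.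
From mathcomp Require Import all_boot all_algebra.
Set Implicit Arguments. Unset Strict Implicit. Unset Printing Implicit Defensive.
Import GRing.Theory.
Local Open Scope ring_scope.

Definition involution (R : pzRingType) (star : R -> R) : Prop :=
  [/\ forall a, star (star a) = a,
      forall a b, star (a + b) = star a + star b &
      forall a b, star (a * b) = star b * star a].

Definition is_MP_inverse (R : pzRingType) (star : R -> R) (a b : R) : Prop :=
  [/\ a * b * a = a, b * a * b = b,
      star (a * b) = a * b & star (b * a) = b * a].

Definition MP_invertible (R : pzRingType) (star : R -> R) (a : R) : Prop :=
  exists b, is_MP_inverse star a b.

Definition projection (R : pzRingType) (star : R -> R) (p : R) : Prop :=
  p * p = p /\ star p = p.

From HB Require Import structures.
From mathcomp Require Import all_boot all_algebra.
Set Implicit Arguments. Unset Strict Implicit. Unset Printing Implicit Defensive.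
Import GRing.Theory.
Local Open Scope ring_scope.

(* The whole argument rests on the criterion: a is MP invertible iff
   a ∈ aa*R and a ∈ Ra*a, in which case a† = x* a y* for a = aa*x = ya*a; for
   hermitian a it reads a ∈ a²R.  Both conditions are stable under multiplication
   by units on the appropriate side, and 1 - pq differs from 1 - pqp and from
   1 - qpq by units of the form 1 ± t with t² = 0; Jacobson's lemma transfers
   invertibility from 1 - aa* = 1 - pqp to 1 - a*a = 1 - qpq for a = pq. *)

Section Involution.
Variables (R : pzRingType) (star : R -> R).
Hypothesis star_inv : involution star.

Lemma starK a : star (star a) = a. Proof. by case: star_inv. Qed.
Lemma starD a b : star (a + b) = star a + star b. Proof. by case: star_inv. Qed.
Lemma starM a b : star (a * b) = star b * star a. Proof. by case: star_inv. Qed.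

Lemma star0 : star 0 = 0.
Proof. by apply: (addrI (star 0)); rewrite -starD !addr0. Qed.

Lemma starB a b : star (a - b) = star a - star b.
Proof.
have starN c : star (- c) = - star c.
  by apply: (addrI (star c)); rewrite -starD !subrr star0.
by rewrite starD starN.
Qed.

Lemma star1 : star 1 = 1.
Proof. by have := starM (star 1) 1; rewrite mulr1 !starK mulr1. Qed.

Definition gram_rideal (a : R) := exists x, a = a * star a * x.
Definition gram_lideal (a : R) := exists y, a = y * star a * a.

Lemma gram_lidealE a : gram_lideal a <-> gram_rideal (star a).
Proof.
rewrite /gram_lideal /gram_rideal; split=> [[y ay] | [x ax]].
  by exists (star y); rewrite starK {1}ay !starM starK mulrA.
rewrite starK in ax; exists (star x).
by rewrite -{1}[a]starK {1}ax !starM starK mulrA.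
Qed.

Lemma gram_rideal_mull u v a : v * u = 1 -> gram_rideal a -> gram_rideal (u * a).
Proof.
move=> vu [x ax]; exists (star v * x).
by rewrite {1}ax starM !mulrA -(mulrA _ (star u)) -starM vu star1 mulr1.
Qed.

Lemma gram_lideal_mulr u v a : u * v = 1 -> gram_lideal a -> gram_lideal (a * u).
Proof.
move=> uv /gram_lidealE ra; apply/gram_lidealE; rewrite starM.
by apply: (gram_rideal_mull (v := star v) _ ra); rewrite -starM uv star1.
Qed.

Lemma gram_rideal_adj a x : a = a * star a * x -> star x * a = star a * x.
Proof.
move=> ax; have sa : star a = star x * a * star a by rewrite {1}ax !starM starK mulrA.
by rewrite {1}ax !mulrA -sa.
Qed.

Lemma MPinvP a : MP_invertible star a <-> gram_rideal a /\ gram_lideal a.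
Proof.
split=> [[b [aba _ sab sba]] | [[x ax] [y ay]]].
  split; exists (star b).
    by rewrite -mulrA -starM sba mulrA aba.
  by rewrite -starM sab aba.
have xa := gram_rideal_adj ax.
have ya : y * star a = a * star y.
  have ay' : star a = star a * star (star a) * star y.
    by rewrite starK {1}ay !starM starK mulrA.
  by have := gram_rideal_adj ay'; rewrite !starK.
have axa : a * star x * a = a by rewrite -mulrA xa mulrA -ax.
have aya : a * star y * a = a by rewrite -ya -ay.
have ab : a * (star x * a * star y) = a * star y by rewrite !mulrA axa.
have ba : star x * a * star y * a = star x * a by rewrite -!mulrA [a * (_ * a)]mulrA aya.
exists (star x * a * star y); split.
- by rewrite ab aya.
- by rewrite ba -!mulrA [a * (star x * _)]mulrA [a * star x * _]mulrA axa.
- by rewrite ab starM starK ya.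
- by rewrite ba xa starM starK.
Qed.

Lemma MPinv_hermitianP a : star a = a -> MP_invertible star a <-> gram_rideal a.
Proof.
move=> sa; split=> [/MPinvP[] // | ra].
by apply/MPinvP; split=> //; apply/gram_lidealE; rewrite sa.
Qed.

Lemma MPinv_star a : MP_invertible star a -> MP_invertible star (star a).
Proof.
case=> b [aba bab sab sba]; exists (star b); split.
- by rewrite -!starM mulrA aba.
- by rewrite -!starM mulrA bab.
- by rewrite -starM starK sba.
- by rewrite -starM starK sab.
Qed.

(* With s = 1 - aa* = s²x and t = 1 - a*a one has ta* = a*s and t² = t - a*sa,
   so t = t²(1 + a*xa). *)
Lemma MPinv_jacobson a :
  MP_invertible star (1 - a * star a) -> MP_invertible star (1 - star a * a).
Proof.
set s := 1 - a * star a; set t := 1 - star a * a.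
have ss : star s = s by rewrite starB star1 starM starK.
have st : star t = t by rewrite starB star1 starM starK.
have ts : t * star a = star a * s by rewrite mulrBl mulrBr mul1r mulr1 mulrA.
have tt : t * t = t - star a * s * a.
  by rewrite {2}/t mulrBr mulr1 mulrA ts.
move/(MPinv_hermitianP ss); rewrite /gram_rideal ss => -[x sx].
apply/(MPinv_hermitianP st); rewrite /gram_rideal st.
have tta : t * t * star a = star a * s * s by rewrite -mulrA ts mulrA ts.
exists (1 + star a * x * a).
rewrite mulrDr mulr1 !mulrA tta -(mulrA (star a) s s) -(mulrA (star a) (s * s)).
by rewrite -sx tt subrK.
Qed.

Lemma MPinv_corner p m : p * p = p -> star p = p -> star m = m ->
  p * m = m -> m * p = m ->
  MP_invertible star (1 - p + m) <-> MP_invertible star m.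
Proof.
move=> pp sp sm pm mp; set e := 1 - p.
have sx : star (e + m) = e + m by rewrite starD starB star1 sp sm.
have pe : p * e = 0 by rewrite mulrBr mulr1 pp subrr.
have ep : e * p = 0 by rewrite mulrBl mul1r pp subrr.
have ee : e * e = e by rewrite {1}/e mulrBl mul1r pe subr0.
clearbody e.
have em : e * m = 0 by rewrite -pm mulrA ep mul0r.
have me : m * e = 0 by rewrite -mp -mulrA pe mulr0.
have px : p * (e + m) = m by rewrite mulrDr pe pm add0r.
have xx : (e + m) * (e + m) = e + m * m.
  by rewrite mulrDl !mulrDr ee em me addr0 add0r.
split=> [/(MPinv_hermitianP sx) | /(MPinv_hermitianP sm)]; rewrite /gram_rideal ?sx ?sm.
  move=> [z xz]; apply/(MPinv_hermitianP sm); rewrite /gram_rideal sm.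
  by exists z; rewrite -{1}px {1}xz xx mulrA mulrDr pe add0r mulrA pm.
move=> [y my]; apply/(MPinv_hermitianP sx); rewrite /gram_rideal sx xx.
exists (e + p * y).
rewrite {1}my mulrDl !mulrDr ee !mulrA ep mul0r addr0 -(mulrA m m e) me mulr0.
by rewrite add0r -(mulrA m m p) mp.
Qed.

Lemma sqr0_mul1B1D (t : R) : t * t = 0 -> (1 - t) * (1 + t) = 1.
Proof. by move=> tt; rewrite mulrDr mulr1 mulrBl mul1r tt subr0 subrK. Qed.

Lemma sqr0_mul1D1B (t : R) : t * t = 0 -> (1 + t) * (1 - t) = 1.
Proof. by move=> tt; rewrite mulrBr mulr1 mulrDl mul1r tt addr0 addrK. Qed.

Lemma MPinv_1Bpq_1Bqp p q : star p = p -> star q = q ->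
  MP_invertible star (1 - p * q) -> MP_invertible star (1 - q * p).
Proof. by move=> sp sq /MPinv_star; rewrite starB star1 starM sp sq. Qed.

Lemma MPinv_1Bpqp_pBpqp p q : projection star p -> star q = q ->
  MP_invertible star (1 - p * q * p) <-> MP_invertible star (p - p * q * p).
Proof.
move=> [pp sp] sq.
have -> : 1 - p * q * p = 1 - p + (p - p * q * p) by rewrite addrA subrK.
apply: MPinv_corner => //.
- by rewrite starB !starM sp sq mulrA.
- by rewrite mulrBr pp !mulrA pp.
- by rewrite mulrBl pp -!mulrA pp.
Qed.

Lemma MPinv_1Bpq_1Bpqp p q : projection star p -> projection star q ->
  MP_invertible star (1 - p * q) <-> MP_invertible star (1 - p * q * p).
Proof.
move=> [pp sp] [qq sq].
have s1Bpqp : star (1 - p * q * p) = 1 - p * q * p by rewrite starB star1 !starM sp sq mulrA.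
set t := p * q * (1 - p); set u := (1 - q) * p * q.
have tpq : t * (p * q) = 0.
  by rewrite /t -!mulrA [(1 - p) * _]mulrA mulrBl mul1r pp subrr !(mul0r, mulr0).
have tt : t * t = 0 by rewrite {2}/t mulrA tpq mul0r.
have pqu : p * q * u = 0.
  by rewrite /u !mulrA -(mulrA p q) mulrBr mulr1 qq subrr !(mul0r, mulr0).
have uu : u * u = 0 by rewrite {1}/u -2!mulrA (mulrA p) pqu mulr0.
have t_pqp : (1 + t) * (1 - p * q) = 1 - p * q * p.
  by rewrite mulrDl mul1r mulrBr mulr1 tpq subr0 /t mulrBr mulr1 addrA subrK.
have u_qpq : (1 - p * q) * (1 + u) = 1 - q * p * q.
  by rewrite mulrDr mulr1 mulrBl mul1r pqu subr0 /u mulrBl mul1r mulrBl addrA subrK.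
split=> [/MPinvP[r1 _] | h].
  apply/(MPinv_hermitianP s1Bpqp); rewrite -t_pqp.
  exact: gram_rideal_mull (sqr0_mul1B1D tt) r1.
have /MPinvP[_ l2] : MP_invertible star (1 - q * p * q).
  have := @MPinv_jacobson (p * q).
  by rewrite starM sp sq !mulrA -(mulrA _ q q) qq -(mulrA _ p p) pp; apply.
have /MPinvP[r1 _] := h.
apply/MPinvP; split.
  have -> : 1 - p * q = (1 - t) * (1 - p * q * p).
    by rewrite -t_pqp mulrA sqr0_mul1B1D // mul1r.
  exact: gram_rideal_mull (sqr0_mul1D1B tt) r1.
have -> : 1 - p * q = (1 - q * p * q) * (1 - u).
  by rewrite -u_qpq -mulrA sqr0_mul1D1B // mulr1.
exact: gram_lideal_mulr (sqr0_mul1B1D uu) l2.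
Qed.

End Involution.

Theorem theorem2p4 (R : pzRingType) (star : R -> R) (p q : R) :
  involution star -> projection star p -> projection star q ->
  [<-> MP_invertible star (1 - p * q);
       MP_invertible star (1 - p * q * p);
       MP_invertible star (p - p * q * p);
       MP_invertible star (1 - q * p);
       MP_invertible star (1 - q * p * q);
       MP_invertible star (q - q * p * q)].
Proof.
move=> inv hp hq; have [_ sp] := hp; have [_ sq] := hq.
have e12 := MPinv_1Bpq_1Bpqp inv hp hq.
have e23 := MPinv_1Bpqp_pBpqp inv hp sq.
have e45 := MPinv_1Bpq_1Bpqp inv hq hp.
have e56 := MPinv_1Bpqp_pBpqp inv hq sp.
have e14 := MPinv_1Bpq_1Bqp inv sp sq.
have e41 := MPinv_1Bpq_1Bqp inv sq sp.
tfae=> [/e12 | /e23 | /e23/e12/e14 | /e45 | /e56 | /e56/e45/e41] //.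
Qed.
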